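(* Let $\pi$ be a permutation of $V=\{1,\dots,n\}$ and $s\in\mathbb{N}$. Let $T$ be a uniformly random transposition on $V$. Then the probability that some cycle of $\pi$ is split in $T\circ\pi$ into two cycles at least one of which has length at most $s$ is at most $2s/(n-1)$.
   Context: A transposition $T=(x,y)$ is uniformly chosen among all transpositions of $V$. If $x$ and $y$ lie in the same cycle of $\pi$, then that cycle is split in $T\circ\pi$ into two cycles; otherwise two cycles are joined. *)

From HB Require Import structures.
From mathcomp Require Import all_boot all_order all_algebra all_fingroup.
Set Implicit Arguments. Unset Strict Implicit. Unset Printing Implicit Defensive.
Import Order.TTheory GRing.Theory Num.Theory.

(* A transposition T = (x y) is represented by the unordered pair
   {x, y}, encoded as the ordered pair (x, y) with x < y; there are 'C(n,2)
   of them and the uniform distribution gives each weight 1 / 'C(n,2).     *)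
Definition transpositions (n : nat) : {set 'I_n * 'I_n} :=
  [set p : 'I_n * 'I_n | (p.1 < p.2)%N].

(* T o pi : first apply pi, then T.  In mathcomp, (s * t) x = t (s x). *)
Definition compT (n : nat) (pi : {perm 'I_n}) (x y : 'I_n) : {perm 'I_n} :=
  (pi * tperm x y)%g.

(* The event: x and y lie in the same cycle of pi (so that cycle is split in
   T o pi into two cycles, namely the cycles of x and of y in T o pi), and at
   least one of these two resulting cycles has length at most s. *)
Definition split_small (n : nat) (pi : {perm 'I_n}) (s : nat) (x y : 'I_n) : bool :=
  (y \in porbit pi x) &&
  ((#|porbit (compT pi x y) x| <= s)%N || (#|porbit (compT pi x y) y| <= s)%N).

Definition split_small_prob (n : nat) (pi : {perm 'I_n}) (s : nat) : rat :=
  (#|[set p in transpositions n | split_small pi s p.1 p.2]|%:R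
     / #|transpositions n|%:R)%R.

From HB Require Import structures.
From mathcomp Require Import all_boot all_order all_algebra all_fingroup.
Import Order.TTheory GRing.Theory Num.Theory.
Set Implicit Arguments. Unset Strict Implicit.

(* If y lies on the pi-cycle of x and k is the first time pi reaches y from x,
   then the cycle of x in pi * (x y) follows pi for k - 1 steps and is sent
   back to x at step k; so its length is k and pi^k x = y.  A split event
   {x, y} is therefore determined by an endpoint z whose new cycle has length
   k <= s, the other endpoint being pi^k z.  This gives at most n s events
   among the n (n - 1) / 2 transpositions. *)

Section CycleOfProductWithTransposition.

Variable T : finType.
Implicit Types (s : {perm T}) (x y : T) (j k : nat).

Lemma card_porbit_first_return s x k :
  0 < k -> iter k s x = x -> (forall j, 0 < j < k -> iter j s x != x) ->
  #|porbit s x| = k.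
Proof.
move=> k_gt0 sk_x first_return.
have m_gt0 : 0 < #|porbit s x| by rewrite lt0n card_porbit_neq0.
case: (ltngtP #|porbit s x| k) => // [lt_m_k | lt_k_m].
  have := first_return _ (introT andP (conj m_gt0 lt_m_k)).
  by rewrite iter_porbit eqxx.
have := nth_uniq x _ _ (uniq_traject_porbit s x).
rewrite size_traject => /(_ 0 k m_gt0 lt_k_m).
by rewrite !nth_traject // sk_x eqxx eq_sym eqn0Ngt k_gt0.
Qed.

Lemma iter_mul_tperm s x y j :
  (forall i, 0 < i <= j -> ~~ pred2 x y (iter i s x)) ->
  iter j (s * tperm x y)%g x = iter j s x.
Proof.
elim: j => [//|j IHj] avoid.
rewrite iterS IHj => [|i /andP[i_gt0 le_ij]]; last by rewrite avoid // i_gt0 ltnW.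
have /norP[ne_x ne_y] := avoid j.+1 (leqnn _).
by rewrite permM -iterS tpermD // eq_sym.
Qed.

Lemma iter_card_porbit_mul_tperm s x y :
  y \in porbit s x -> x != y -> iter #|porbit (s * tperm x y)%g x| s x = y.
Proof.
move=> y_in ne_xy.
have reach_y : exists k, (0 < k) && (iter k s x == y).
  case/porbitP: y_in ne_xy => i -> ne_xy; exists i; rewrite -permX eqxx andbT lt0n.
  by apply: contraNneq ne_xy => i0; rewrite i0 expg0 perm1.
case: (ex_minnP reach_y) => k /andP[k_gt0 /eqP sk_x] k_min.
have avoid j : 0 < j < k -> ~~ pred2 x y (iter j s x).
  case/andP=> j_gt0 lt_jk; apply/norP; split; apply/eqP => sj_x.
    have skj_x : iter (k - j) s x = y.
      by rewrite -sk_x -{2}(subnK (ltnW lt_jk)) iterD sj_x.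
    have := k_min (k - j); rewrite subn_gt0 lt_jk skj_x eqxx => /(_ isT).
    by rewrite leqNgt ltn_subrL j_gt0 (leq_trans j_gt0 (ltnW lt_jk)).
  have := k_min j; rewrite j_gt0 sj_x eqxx => /(_ isT).
  by rewrite leqNgt lt_jk.
have avoid_upto j : j < k -> forall i, 0 < i <= j -> ~~ pred2 x y (iter i s x).
  by move=> lt_jk i /andP[i_gt0 le_ij]; rewrite avoid // i_gt0 (leq_ltn_trans le_ij).
suff -> : #|porbit (s * tperm x y)%g x| = k by [].
apply: card_porbit_first_return => //.
- have lt_pk : k.-1 < k by rewrite ltn_predL.
  rewrite -(prednK k_gt0) iterS (iter_mul_tperm (avoid_upto _ lt_pk)).
  by rewrite permM -(iterS _ s) prednK // sk_x tpermR.
- move=> j j_range; have /norP[ne_jx _] := avoid j j_range.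
  case/andP: j_range => _ lt_jk.
  by rewrite (iter_mul_tperm (avoid_upto _ lt_jk)).
Qed.

End CycleOfProductWithTransposition.

Lemma card_transpositions n : #|transpositions n| = 'C(n, 2).
Proof.
rewrite -bin2_sum big_mkord -sum1_card.
rewrite (eq_bigl (fun p : 'I_n * 'I_n => p.1 < p.2)); last by move=> p; rewrite inE.
rewrite -(pair_big_dep xpredT (fun i j : 'I_n => i < j) (fun _ _ => 1)) /=.
rewrite (exchange_big_dep xpredT) //=; apply: eq_bigr => j _.
by rewrite (big_ord_narrow (ltnW (ltn_ord j))) sum1_card card_ord.
Qed.

Lemma small_cycle_witness n (pi : {perm 'I_n}) s x y :
  y \in porbit pi x -> x != y -> #|porbit (compT pi x y) x| <= s ->
  exists j : 'I_s, (pi ^+ j.+1)%g x = y.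
Proof.
move=> y_in ne_xy small.
set k := #|porbit (compT pi x y) x| in small.
have k_gt0 : 0 < k by rewrite lt0n card_porbit_neq0.
have lt_ks : k.-1 < s by rewrite prednK.
exists (Ordinal lt_ks); change ((pi ^+ k.-1.+1)%g x = y).
by rewrite prednK // permX iter_card_porbit_mul_tperm.
Qed.

Lemma split_small_witness n (pi : {perm 'I_n}) s x y :
  x != y -> split_small pi s x y ->
  exists j : 'I_s, (pi ^+ j.+1)%g x = y \/ (pi ^+ j.+1)%g y = x.
Proof.
move=> ne_xy /andP[y_in /orP[small_x | small_y]].
  by have [j sj_x] := small_cycle_witness y_in ne_xy small_x; exists j; left.
rewrite porbit_sym in y_in; rewrite eq_sym in ne_xy.
rewrite /compT tpermC -/(compT pi y x) in small_y.
by have [j sj_y] := small_cycle_witness y_in ne_xy small_y; exists j; right.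
Qed.

Lemma card_split_small n (pi : {perm 'I_n}) s :
  #|[set p in transpositions n | split_small pi s p.1 p.2]| <= n * s.
Proof.
pose edge (q : 'I_n * 'I_s) :=
  let w := (pi ^+ q.2.+1)%g q.1 in if q.1 < w then (q.1, w) else (w, q.1).
rewrite -[n in n * _]card_ord -[s in _ * s]card_ord -card_prod -cardsT.
apply: leq_trans (leq_imset_card edge _).
apply/subset_leq_card/subsetP => -[x y]; rewrite !inE /= => /andP[lt_xy small].
have ne_xy : x != y by rewrite neq_ltn lt_xy.
have [j [sj_x | sj_y]] := split_small_witness ne_xy small; apply/imsetP.
  by exists (x, j); rewrite ?inE // /edge /= sj_x lt_xy.
by exists (y, j); rewrite ?inE // /edge /= sj_y ltnNge ltnW.
Qed.

Local Open Scope ring_scope.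

Theorem lemma2p1 (n : nat) (pi : {perm 'I_n}) (s : nat) (hn : (2 <= n)%N) :
  split_small_prob pi s <= (2 * s)%:R / (n - 1)%:R.
Proof.
have T_double : (#|transpositions n| * 2 = n * n.-1)%N.
  by rewrite card_transpositions mulnC -mul_bin_diag bin1.
have T_gt0 : (0 < #|transpositions n|)%N by rewrite card_transpositions bin_gt0.
rewrite /split_small_prob ler_pdivrMr ?ltr0n // mulrAC.
rewrite ler_pdivlMr ?ltr0n ?subn_gt0 // -!natrM ler_nat.
apply: leq_trans (leq_mul (card_split_small pi s) (leqnn (n - 1))) _.
by rewrite subn1 mulnAC -T_double [in X in (_ <= X)%N]mulnC mulnA.
Qed.
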